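(* In the standard LLP setup, fix $N\ge1$. If there is no starting error in $L(G,\gamma^N_{cons})$, i.e. $f^N_{cons}(\epsilon)\neq\emptyset$, then there is no run-time error in $L(G,\gamma^N_{cons})$, i.e. $f^N_{cons}(s)\neq\emptyset$ for all $s\in L(G,\gamma^N_{cons})$.
   Context: Standard LLP setup. $\Sigma=\Sigma_c\,\dot\cup\,\Sigma_{uc}$ is a finite alphabet partitioned into controllable and uncontrollable events. The plant $G$ has generated language $L(G)$ and marked language $L_m(G)$ with $L(G)=\overline{L_m(G)}$ ($\overline{M}$ = set of prefixes of strings in $M$). The legal language $K\subseteq L_m(G)$ satisfies $K=\overline{K}\cap L_m(G)$. For a prefix-closed $L$, $M$ is controllable w.r.t. $L$ if $\overline{M}\Sigma_{uc}\cap L\subseteq\overline{M}$. For a language $L$ and $s\in\Sigma^*$: $L/s=\{t: st\in L\}$; $L|_N=\{t\in L:|t|\le N\}$; $\Sigma_{L(G)}(s)=\{\sigma\in\Sigma: s\sigma\in L(G)\}$. $M^{\uparrow/s|_N}$ is the supremal sublanguage of $M$ controllable w.r.t. $L(G)/s|_N$. Conservative attitude: $f^N_{cons}(s)=[K/s|_{N-1}]^{\uparrow/s|_N}$; control policy $\gamma^N_{cons}(s)=(\overline{f^N_{cons}(s)}\cap\Sigma)\cup(\Sigma_{uc}\cap\Sigma_{L(G)}(s))$. Closed-loop language $L(G,\gamma)$: $\epsilon\in L(G,\gamma)$, and $s\sigma\in L(G,\gamma)$ iff $s\in L(G,\gamma)$, $s\sigma\in L(G)$, $\sigma\in\gamma(s)$.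 A run-time error occurs at $s$ if $s\in L(G,\gamma^N)$ and $f^N(s)=\emptyset$; a starting error is a run-time error at $s=\epsilon$. *)

From mathcomp Require Import all_boot.
Set Implicit Arguments. Unset Strict Implicit. Unset Printing Implicit Defensive.

Definition lang (T : Type) := seq T -> Prop.

Section LLP.
Variable T : finType.

Definition pclos (M : lang T) : lang T := fun u => exists v, M (u ++ v).

Definition subl (M1 M2 : lang T) : Prop := forall u, M1 u -> M2 u.

Definition controllable (uc : pred T) (M L : lang T) : Prop :=
  forall u (a : T), pclos M u -> uc a -> L (rcons u a) -> pclos M (rcons u a).

Definition supC (uc : pred T) (M L : lang T) : lang T :=
  fun t => exists M', subl M' M /\ controllable uc M' L /\ M' t.

Definition quot (L : lang T) (s : seq T) : lang T := fun t => L (s ++ t).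

Definition trunc (L : lang T) (N : nat) : lang T := fun t => L t /\ size t <= N.

(* conservative attitude: f^N_cons(s) = [K/s|_{N-1}]^{uparrow / s|_N},
   where L(G) = pclos Lm *)
Definition f_cons (uc : pred T) (Lm K : lang T) (N : nat) (s : seq T) : lang T :=
  supC uc (trunc (quot K s) N.-1) (trunc (quot (pclos Lm) s) N).

Definition gamma_cons (uc : pred T) (Lm K : lang T) (N : nat) (s : seq T) (a : T)
  : Prop :=
  pclos (f_cons uc Lm K N s) [:: a] \/ (uc a /\ pclos Lm (rcons s a)).

Inductive closed_loop (L : lang T) (gamma : seq T -> T -> Prop) : lang T :=
| cl_nil : closed_loop L gamma [::]
| cl_step s a : closed_loop L gamma s -> L (rcons s a) -> gamma s a ->
                closed_loop L gamma (rcons s a).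

Definition nonempty (M : lang T) : Prop := exists t, M t.

End LLP.

(* The proof rests on the left derivative  a^-1 M = {t | a t \in M}  of a
   language.  If M is a controllable sublanguage of K/s|_n with respect to
   L(G)/s|_{n+1}, then a^-1 M is a controllable sublanguage of K/sa|_n with
   respect to L(G)/sa|_{n+1}: lookahead windows simply shift by one event.
   Hence f^N_cons is closed under derivatives: a t \in f^N_cons(s) implies
   t \in f^N_cons(sa).  Moreover, once f^N_cons(s) is nonempty, every
   uncontrollable event a possible after s is a prefix of f^N_cons(s),
   because the empty word is a prefix of the supremal controllable
   sublanguage.  So both ways an event can be enabled by gamma^N_cons lead
   from a nonempty f^N_cons(s) to a nonempty f^N_cons(sa), and the theorem
   follows by induction on the closed-loop language. *)
From mathcomp Require Import all_boot.

Set Implicit Arguments.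
Unset Strict Implicit.
Unset Printing Implicit Defensive.

Section Derivative.
Variable T : finType.

Definition deriv (M : lang T) (a : T) : lang T := fun t => M (a :: t).

Lemma quot_rcons (L : lang T) s a t : quot L (rcons s a) t <-> quot L s (a :: t).
Proof. by rewrite /quot cat_rcons. Qed.

Lemma deriv_subl_trunc (L M : lang T) s a n :
  subl M (trunc (quot L s) n) -> subl (deriv M a) (trunc (quot L (rcons s a)) n).
Proof.
move=> sub_M t /sub_M [Lat size_at]; split; first exact/quot_rcons.
exact: leq_trans (leqnSn _) size_at.
Qed.

Lemma deriv_controllable (uc : pred T) (L M : lang T) s a n :
  (forall t, M t -> size t <= n) ->
  controllable uc M (trunc (quot L s) n.+1) ->
  controllable uc (deriv M a) (trunc (quot L (rcons s a)) n.+1).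
Proof.
move=> size_M ctrl_M u b [w Mauw] uc_b [Lub size_ub].
have size_au : size (a :: u) <= n.
  by apply: leq_trans (size_M _ Mauw); rewrite /= size_cat leq_addr.
have [x Maubx] : pclos M (rcons (a :: u) b).
  apply: ctrl_M => //; first by exists w.
  by split; [exact/quot_rcons | rewrite size_rcons].
by exists x.
Qed.

End Derivative.

Section Supremal.
Variables (T : finType) (uc : pred T).

Lemma supC_uncontrollable_event (M L : lang T) a :
  nonempty (supC uc M L) -> uc a -> L [:: a] -> pclos (supC uc M L) [:: a].
Proof.
move=> [t [M' [sub_M' [ctrl_M' M't]]]] uc_a La.
have [v M'av] : pclos M' (rcons [::] a) by apply: ctrl_M' => //; exists t.
by exists v, M'.
Qed.

Lemma supC_deriv (K L : lang T) s a n v :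
  supC uc (trunc (quot K s) n) (trunc (quot L s) n.+1) (a :: v) ->
  supC uc (trunc (quot K (rcons s a)) n) (trunc (quot L (rcons s a)) n.+1) v.
Proof.
move=> [M [sub_M [ctrl_M Mav]]]; exists (deriv M a); split.
  exact: deriv_subl_trunc.
split=> //; by apply: deriv_controllable ctrl_M => t /sub_M [].
Qed.

End Supremal.

Section Conservative.
Variables (T : finType) (uc : pred T) (Lm K : lang T) (N : nat).
Hypothesis N_gt0 : 1 <= N.

Lemma f_cons_deriv s a v :
  f_cons uc Lm K N s (a :: v) -> f_cons uc Lm K N (rcons s a) v.
Proof. by case: N N_gt0 => // n _; apply: supC_deriv. Qed.

Lemma gamma_cons_prefix s a :
  nonempty (f_cons uc Lm K N s) -> gamma_cons uc Lm K N s a ->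
  pclos (f_cons uc Lm K N s) [:: a].
Proof.
move=> f_s [// | [uc_a Lm_sa]].
apply: supC_uncontrollable_event => //.
by split; [rewrite /quot cats1 | ].
Qed.

End Conservative.

Theorem theorem6 (T : finType) (uc : pred T) (Lm K : lang T) (N : nat) :
  subl K Lm ->
  (forall t, K t <-> (pclos K t /\ Lm t)) ->
  1 <= N ->
  nonempty (f_cons uc Lm K N [::]) ->
  forall s, closed_loop (pclos Lm) (gamma_cons uc Lm K N) s ->
    nonempty (f_cons uc Lm K N s).
Proof.
move=> _ _ N_gt0 f_nil s.
elim=> [// | {}s a _ f_s _ gamma_sa].
have [v f_s_av] := gamma_cons_prefix N_gt0 f_s gamma_sa.
by exists v; apply: f_cons_deriv.
Qed.
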